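(* Let $Q\in\mathbb{R}^{n\times n}$ be symmetric and let $F\in\mathbb{R}^{n\times k}$ have rows $f_1,\dots,f_n$ with $\|f_i\|=1$ for all $i$; put $X=FF^T$. Let $D\in\mathbb{R}^{n\times k}$ have rows $d_1,\dots,d_n$ with $\langle f_i,d_i\rangle=0$ for all $i$. For $t\ge0$ let $F(t)$ be the matrix with rows $(f_i+td_i)/\|f_i+td_i\|$, $X(t)=F(t)F(t)^T$, and \[ \Phi(t)=\frac{2}{\pi}\langle Q,\arcsin X(t)\rangle. \] Then the one-sided directional derivative $G_D=\lim_{t\to0^+}\frac{\Phi(t)-\Phi(0)}{t}$ exists and equals \[ G_D=2\sum_{i<j}Q_{ij}\mu_{ij},\qquad \mu_{ij}=\begin{cases}\dfrac{2}{\pi}\dfrac{\langle f_i,d_j\rangle+\langle f_j,d_i\rangle}{\sqrt{1-X_{ij}^2}}, & X_{ij}\in(-1,1),\\[2ex] \dfrac{2}{\pi}\|d_i+d_j\|, & X_{ij}=-1,\\[1ex] -\dfrac{2}{\pi}\|d_i-d_j\|, & X_{ij}=1.\end{cases} \] Moreover, as a function of $D$ (on the linear subspace $\{D:\langle f_i,d_i\rangle=0\ \forall i\}$), $G_D$ is the sum of a linear function $2\sum_{i<j,\,|X_{ij}|<1}Q_{ij}\mu_{ij}$, a nonpositive concave positively homogeneous function $2\sum_{i<j,\,X_{ij}=\operatorname{sgn}Q_{ij}}Q_{ij}\mu_{ij}$, and a nonnegative convex positively homogeneous function $2\sum_{i<j,\,X_{ij}=-\operatorname{sgn}Q_{ij}}Q_{ij}\mu_{ij}$;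 in particular $D\mapsto G_D$ is a difference of convex functions.
   Context: $\arcsin$ is applied entrywise to matrices (values in $[-\pi/2,\pi/2]$), $\langle A,B\rangle=\sum_{i,j}A_{ij}B_{ij}$ for matrices and the standard inner product for vectors, $\|\cdot\|$ is the Euclidean norm, and $\operatorname{sgn}$ is the sign function (pairs with $Q_{ij}=0$ contribute zero). *)

From HB Require Import structures.
From mathcomp Require Import all_boot all_order all_algebra.
From mathcomp Require Import all_classical all_reals all_analysis.
Set Implicit Arguments. Unset Strict Implicit. Unset Printing Implicit Defensive.
Import Order.TTheory GRing.Theory Num.Theory.
Local Open Scope ring_scope.

Section Defs.
Variable R : realType.

Definition dotv k (u v : 'rV[R]_k) : R := \sum_(j < k) u 0 j * v 0 j.
Definition enorm k (u : 'rV[R]_k) : R := Num.sqrt (dotv u u).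

Definition frob m n (A B : 'M[R]_(m, n)) : R := \sum_(i < m) \sum_(j < n) A i j * B i j.

Definition asin_mx m n (A : 'M[R]_(m, n)) : 'M[R]_(m, n) := \matrix_(i, j) asin (A i j).

Definition gram n k (F : 'M[R]_(n, k)) : 'M[R]_n := F *m F^T.

Definition Fpath n k (F D : 'M[R]_(n, k)) (t : R) : 'M[R]_(n, k) :=
  \matrix_(i, j) ((F i j + t * D i j) / enorm (row i F + t *: row i D)).

Definition Phi n k (Q : 'M[R]_n) (F D : 'M[R]_(n, k)) (t : R) : R :=
  2 / pi * frob Q (asin_mx (gram (Fpath F D t))).

Definition mu n k (F D : 'M[R]_(n, k)) (i j : 'I_n) : R :=
  let x := gram F i j in
  if (-1 < x < 1) then
    2 / pi * (dotv (row i F) (row j D) + dotv (row j F) (row i D)) / Num.sqrt (1 - x ^+ 2)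
  else if x == -1 then 2 / pi * enorm (row i D + row j D)
  else if x == 1 then - (2 / pi * enorm (row i D - row j D))
  else 0.

Definition Gpart n k (Q : 'M[R]_n) (F : 'M[R]_(n, k)) (P : 'I_n -> 'I_n -> bool)
  (D : 'M[R]_(n, k)) : R :=
  2 * \sum_(i < n) \sum_(j < n | (i < j)%N && P i j) Q i j * mu F D i j.

Definition GD n k (Q : 'M[R]_n) (F D : 'M[R]_(n, k)) : R :=
  Gpart Q F (fun _ _ => true) D.

Definition Glin n k (Q : 'M[R]_n) (F : 'M[R]_(n, k)) :=
  Gpart Q F (fun i j => `|gram F i j| < 1).
Definition Gcav n k (Q : 'M[R]_n) (F : 'M[R]_(n, k)) :=
  Gpart Q F (fun i j => gram F i j == Num.sg (Q i j)).
Definition Gvex n k (Q : 'M[R]_n) (F : 'M[R]_(n, k)) :=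
  Gpart Q F (fun i j => gram F i j == - Num.sg (Q i j)).

Definition tangent n k (F D : 'M[R]_(n, k)) : Prop :=
  forall i : 'I_n, dotv (row i F) (row i D) = 0.

Definition convex_on n k (S : 'M[R]_(n, k) -> Prop) (g : 'M[R]_(n, k) -> R) : Prop :=
  forall D1 D2 (l : R), S D1 -> S D2 -> 0 <= l <= 1 ->
    g (l *: D1 + (1 - l) *: D2) <= l * g D1 + (1 - l) * g D2.

Definition concave_on n k (S : 'M[R]_(n, k) -> Prop) (g : 'M[R]_(n, k) -> R) : Prop :=
  forall D1 D2 (l : R), S D1 -> S D2 -> 0 <= l <= 1 ->
    l * g D1 + (1 - l) * g D2 <= g (l *: D1 + (1 - l) *: D2).

Definition linear_on n k (S : 'M[R]_(n, k) -> Prop) (g : 'M[R]_(n, k) -> R) : Prop :=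
  forall D1 D2 (a b : R), S D1 -> S D2 -> g (a *: D1 + b *: D2) = a * g D1 + b * g D2.

Definition pos_homogeneous_on n k (S : 'M[R]_(n, k) -> Prop) (g : 'M[R]_(n, k) -> R) : Prop :=
  forall D (a : R), S D -> 0 <= a -> g (a *: D) = a * g D.

End Defs.

(* Since [d_i] is orthogonal to the unit vector
   [f_i], the entry [X(t)_ij] equals [(x + t c + t^2 e) / g(t)] with [x = X_ij],
   [c = <f_i,d_j> + <f_j,d_i>], [e = <d_i,d_j>] and
   [g(t) = sqrt(1 + t^2 |d_i|^2) sqrt(1 + t^2 |d_j|^2) = 1 + O(t^2)].
   If [|x| < 1], the chain rule for [asin] gives the derivative [c / sqrt(1 - x^2)].
   If [x = +-1], then [f_i = +-f_j], so [c = 0] and [1 -+ X(t)_ij = t^2 h(t)] with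
   [h] continuous; the half-angle identity
   [asin y = pi/2 - 2 asin (sqrt ((1 - y) / 2))] turns the square-root singularity
   of [asin] at [+-1] into the one-sided derivative [-+ sqrt(2 h(0)) = -+ |d_i -+ d_j|].
   Summing over the symmetric pairs gives [G_D].  For the decomposition, [mu_ij]
   is linear in [D] where [|X_ij| < 1], while on the faces [X_ij = +-1] it is
   [-+ 2/pi] times a seminorm of [D]; so [Q_ij mu_ij] is concave and nonpositive
   when [X_ij = sgn Q_ij], and convex and nonnegative when [X_ij = -sgn Q_ij]. *)

From HB Require Import structures.
From mathcomp Require Import all_boot all_order all_algebra.
From mathcomp Require Import all_classical all_reals all_analysis.
From mathcomp Require Import ring lra.
Import Order.TTheory GRing.Theory Num.Theory numFieldNormedType.Exports.
Local Open Scope classical_set_scope.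
Local Open Scope ring_scope.

Section AsinValues.
Context {R : realType}.
Implicit Types y : R.

Lemma asin0 : asin (0 : R) = 0.
Proof.
have pi0 := pi_gt0 R.
by rewrite -{1}sin0 sinK // in_itv /=; apply/andP; split; lra.
Qed.

Lemma asin1 : asin (1 : R) = pi / 2.
Proof.
have pi0 := pi_gt0 R.
by rewrite -[in LHS]sin_pihalf sinK // in_itv /=; apply/andP; split; lra.
Qed.

Lemma asinN y : -1 <= y <= 1 -> asin (- y) = - asin y.
Proof.
move=> yI; have := asin_geNpi2 yI; have := asin_lepi2 yI => y1 y2.
rewrite -{1}(asinK yI) ?in_itv //= -sinN sinK // in_itv /=.
by apply/andP; split; lra.
Qed.

Lemma asinN1 : asin (-1 : R) = - (pi / 2).
Proof. by rewrite asinN ?asin1 //; apply/andP; split; lra. Qed.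

(* The half-angle formula [cos (2 a) = 1 - 2 sin a ^+ 2], read through [asin]. *)
Lemma asin_half_angle y : -1 <= y <= 1 ->
  asin y = pi / 2 - asin (Num.sqrt ((1 - y) / 2)) *+ 2.
Proof.
move=> /andP[y1 y2]; set s := Num.sqrt _.
have pi0 := pi_gt0 R.
have s0 : 0 <= s by exact: sqrtr_ge0.
have s2 : s ^+ 2 = (1 - y) / 2 by rewrite sqr_sqrtr //; lra.
have s1 : s <= 1 by rewrite -(sqrtr1 R) ler_sqrt; lra.
have sI : -1 <= s <= 1 by apply/andP; split; lra.
have a1 := asin_lepi2 sI.
have sinK' : sin (asin s) = s by apply: asinK; rewrite in_itv /= sI.
have a0 : 0 <= asin s.
  rewrite leNgt; apply/negP => hlt; have a2 := asin_geNpi2 sI.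
  have : 0 < sin (- asin s) by apply: sin_gt0_pi; apply/andP; split; lra.
  by rewrite sinN sinK'; lra.
rewrite -[RHS]sinK.
  congr asin; rewrite sinB sin_pihalf cos_pihalf mul0r subr0 mul1r.
  by rewrite cos_mulr2n cos2sin2 sinK' s2 mulr2n; field.
by rewrite in_itv /= [asin s *+ 2]mulr2n; apply/andP; split; lra.
Qed.

End AsinValues.

Lemma cvg_at_right_diff_quot_comp {R : realType} {phi Y V : R -> R} {y0 dphi : R} :
  is_derive y0 1 phi dphi -> (forall t, Y t = y0 + t * V t) ->
  V x @[x --> 0] --> V 0 ->
  (fun t => (phi (Y t) - phi y0) / t) @ 0^'+ --> dphi * V 0.
Proof.
move=> dphi_y0 YE cV.
have Y0 : Y 0 = y0 by rewrite YE mul0r addr0.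
have quotY : (fun h : R => h^-1 *: ((Y \o shift 0) (h *: 1) - Y 0)) @ 0^' --> V 0.
  have cV' : V x @[x --> 0^'] --> V 0 by exact: cvg_within_filter.
  apply: cvg_trans cV'; apply: near_eq_cvg; near=> h.
  have h0 : h != 0 by near: h; exact: nbhs_dnbhs_neq.
  by rewrite /= Y0 YE addr0 [_ *: 1]mulr1 addrC addKr /GRing.scale /= mulrA mulVf // mul1r.
have dY : is_derive (0 : R) (1 : R) Y (V 0).
  by apply: DeriveDef; [apply/cvg_ex; exists (V 0) | exact: cvg_lim].
have dphiY : is_derive (0 : R) (1 : R) (phi \o Y) (dphi * V 0).
  by apply: is_derive1_comp => //; rewrite Y0.
have [+ _] := dphiY; rewrite /derivable => /cvg_dnbhs_at_right.
rewrite -/(derive _ _ _) derive_val.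
apply: cvg_trans; apply: near_eq_cvg; near=> h.
by rewrite /= Y0 addr0 [_ *: 1]mulr1 /GRing.scale /= mulrC.
Unshelve. all: by end_near. Qed.

Lemma cvg_at_right_asin_quot1 {R : realType} {Y h : R -> R} :
  (forall t, 0 < t -> -1 <= Y t <= 1) -> (forall t, 1 - Y t = t ^+ 2 * h t) ->
  h x @[x --> 0] --> h 0 ->
  (fun t => (asin (Y t) - pi / 2) / t) @ 0^'+ --> - Num.sqrt (2 * h 0).
Proof.
move=> YI Yh ch.
pose w t := Num.sqrt (h t / 2).
have cw : w x @[x --> 0] --> w 0.
  exact: (continuous_cvg _ (@sqrt_continuous R _) (cvgMr_tmp (b := 2^-1) ch)).
have dasin0 : is_derive (0 : R) 1 asin 1.
  by have := @is_derive1_asin R 0; rewrite expr0n subr0 sqrtr1 invr1; apply; lra.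
have := cvg_at_right_diff_quot_comp dasin0 (fun t => erefl) cw.
rewrite mul1r asin0 => /(cvgMl_tmp (a := - 2)).
have -> : - 2 * w 0 = - Num.sqrt (2 * h 0).
  rewrite /w (_ : 2 * h 0 = 2 ^+ 2 * (h 0 / 2)); last by field.
  by rewrite [in RHS]sqrtrM ?sqr_ge0 // sqrtr_sqr ger0_norm // mulNr.
apply: cvg_trans; apply: near_eq_cvg; near=> t.
have t0 : 0 < t by near: t; exact: nbhs_right_gt.
rewrite /= (asin_half_angle _ (YI t t0)) Yh -mulrA sqrtrM ?sqr_ge0 // sqrtr_sqr.
by rewrite gtr0_norm // add0r subr0 -/(w t); field; lra.
Unshelve. all: by end_near. Qed.

Lemma cvg_quadratic (R : realType) (a b : R) : a + x ^+ 2 * b @[x --> (0 : R)] --> a.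
Proof.
have : a + x ^+ 2 * b @[x --> (0 : R)] --> a + 0 ^+ 2 * b.
  apply: cvgD; first exact: cvg_cst.
  by apply: cvgMr_tmp; exact: (@exprn_continuous R 2 0).
by rewrite expr0n mul0r addr0.
Qed.

Section ScalarModel.
Context {R : realType}.
Variables p q : R.
Hypotheses (p_ge0 : 0 <= p) (q_ge0 : 0 <= q).

(* The product of the norms of [f_i + t d_i] and [f_j + t d_j] for unit
   vectors [f] orthogonal to [d], with [p = |d_i|^2] and [q = |d_j|^2]. *)
Definition pair_scale (t : R) : R :=
  Num.sqrt (1 + t ^+ 2 * p) * Num.sqrt (1 + t ^+ 2 * q).

Let one_add_sqr_gt0 (t u : R) : 0 <= u -> 0 < 1 + t ^+ 2 * u.
Proof. by move=> u0; rewrite ltr_pwDl // mulr_ge0 // sqr_ge0. Qed.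

Let defect (t : R) : R := (p + q + t ^+ 2 * (p * q)) / (pair_scale t + 1).

Lemma pair_scale0 : pair_scale 0 = 1.
Proof. by rewrite /pair_scale expr0n /= !mul0r addr0 sqrtr1 mulr1. Qed.

Lemma pair_scale_gt0 t : 0 < pair_scale t.
Proof. by apply: mulr_gt0; rewrite sqrtr_gt0 one_add_sqr_gt0. Qed.

Lemma pair_scaleE t : pair_scale t = 1 + t ^+ 2 * defect t.
Proof.
have g1 : pair_scale t + 1 != 0 by rewrite gt_eqF // addr_gt0 ?pair_scale_gt0.
have gsqr : (pair_scale t - 1) * (pair_scale t + 1) = t ^+ 2 * (p + q + t ^+ 2 * (p * q)).
  have -> : (pair_scale t - 1) * (pair_scale t + 1) = pair_scale t ^+ 2 - 1 by ring.
  by rewrite /pair_scale exprMn !sqr_sqrtr ?ltW ?one_add_sqr_gt0 //; ring.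
by rewrite /defect mulrA -gsqr mulfK // addrC subrK.
Qed.

Lemma cvg_pair_scale : pair_scale x @[x --> (0 : R)] --> pair_scale 0.
Proof.
rewrite pair_scale0 -(mulr1 1) -sqrtr1.
by apply: cvgM; apply: continuous_cvg (@sqrt_continuous R _) _; exact: cvg_quadratic.
Qed.

Lemma defect0 : defect 0 = (p + q) / 2.
Proof. by rewrite /defect pair_scale0 expr0n /= mul0r addr0. Qed.

Lemma cvg_defect : defect x @[x --> (0 : R)] --> defect 0.
Proof.
rewrite defect0; apply: cvgM; first exact: cvg_quadratic.
apply: cvgV; first by rewrite pnatr_eq0.
by rewrite -pair_scale0; apply: cvgD; [exact: cvg_pair_scale | exact: cvg_cst].
Qed.

Lemma asin_quot_interior {x c e : R} {X : R -> R} : -1 < x < 1 ->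
  (forall t, X t = (x + t * c + t ^+ 2 * e) / pair_scale t) ->
  (fun t => (asin (X t) - asin x) / t) @ 0^'+ --> c / Num.sqrt (1 - x ^+ 2).
Proof.
move=> xI XE.
pose V t := (c + t * e - x * (t * defect t)) / pair_scale t.
have XV t : X t = x + t * V t.
  have g0 := pair_scale_gt0 t.
  by rewrite XE /V pair_scaleE in g0 *; field; rewrite gt_eqF.
have cV : V x @[x --> 0] --> V 0.
  apply: cvgM; last by apply: cvgV; [rewrite pair_scale0 oner_neq0 | exact: cvg_pair_scale].
  apply: cvgB; first by apply: cvgD; [exact: cvg_cst | apply: cvgMr_tmp; exact: cvg_id].
  by apply: cvgMl_tmp; apply: cvgM; [exact: cvg_id | exact: cvg_defect].
have := cvg_at_right_diff_quot_comp (is_derive1_asin xI) XV cV.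
by rewrite /V pair_scale0 !mul0r mulr0 addr0 subr0 divr1 mulrC.
Qed.

Lemma asin_quot_at1 {e : R} {X : R -> R} :
  (forall t, X t = (1 + t ^+ 2 * e) / pair_scale t) ->
  (forall t, 0 < t -> -1 <= X t <= 1) ->
  (fun t => (asin (X t) - asin 1) / t) @ 0^'+ --> - Num.sqrt (p + q - 2 * e).
Proof.
move=> XE XI.
pose h t := (defect t - e) / pair_scale t.
have Xh t : 1 - X t = t ^+ 2 * h t.
  have g0 := pair_scale_gt0 t.
  by rewrite XE /h pair_scaleE in g0 *; field; rewrite gt_eqF.
have ch : h x @[x --> 0] --> h 0.
  apply: cvgM; last by apply: cvgV; [rewrite pair_scale0 oner_neq0 | exact: cvg_pair_scale].
  by apply: cvgB; [exact: cvg_defect | exact: cvg_cst].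
have := cvg_at_right_asin_quot1 XI Xh ch.
have -> : 2 * h 0 = p + q - 2 * e by rewrite /h pair_scale0 defect0 divr1; field.
by rewrite asin1.
Qed.

Lemma asin_quot_atN1 {e : R} {X : R -> R} :
  (forall t, X t = (-1 + t ^+ 2 * e) / pair_scale t) ->
  (forall t, 0 < t -> -1 <= X t <= 1) ->
  (fun t => (asin (X t) - asin (-1)) / t) @ 0^'+ --> Num.sqrt (p + q + 2 * e).
Proof.
move=> XE XI.
have NXE t : - X t = (1 + t ^+ 2 * - e) / pair_scale t.
  by rewrite XE -mulNr opprD opprK mulrN.
have NXI t : 0 < t -> -1 <= - X t <= 1.
  by move=> /XI /andP[? ?]; apply/andP; split; lra.
rewrite (_ : p + q + 2 * e = p + q - 2 * - e); last by ring.
rewrite -[X in _ --> X]opprK; apply: cvg_trans (cvgN (asin_quot_at1 NXE NXI)).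
apply: near_eq_cvg; near=> t.
have t0 : 0 < t by near: t; exact: nbhs_right_gt.
rewrite -[LHS]/(- ((asin (- X t) - asin 1) / t)) asinN ?XI // asin1 asinN1 -mulNr.
by congr (_ * _); lra.
Unshelve. all: by end_near. Qed.

End ScalarModel.

Section InnerProduct.
Context {R : realType} {k : nat}.
Implicit Types (u v w : 'rV[R]_k) (a : R).

Lemma dotvC u v : dotv u v = dotv v u.
Proof. by apply: eq_bigr => l _; rewrite mulrC. Qed.

Lemma dotv_ge0 u : 0 <= dotv u u.
Proof. by apply: sumr_ge0 => l _; rewrite -expr2 sqr_ge0. Qed.

Lemma dotvDl u v w : dotv (u + v) w = dotv u w + dotv v w.
Proof. by rewrite /dotv -big_split; apply: eq_bigr => l _; rewrite !mxE mulrDl. Qed.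

Lemma dotvZl a u w : dotv (a *: u) w = a * dotv u w.
Proof. by rewrite /dotv mulr_sumr; apply: eq_bigr => l _; rewrite !mxE mulrA. Qed.

Lemma dotvNl u w : dotv (- u) w = - dotv u w.
Proof. by rewrite -scaleN1r dotvZl mulN1r. Qed.

Lemma dotvDr u v w : dotv w (u + v) = dotv w u + dotv w v.
Proof. by rewrite dotvC dotvDl !(dotvC w). Qed.

Lemma dotvZr a u w : dotv w (a *: u) = a * dotv w u.
Proof. by rewrite dotvC dotvZl dotvC. Qed.

Lemma dotvNr u w : dotv w (- u) = - dotv w u.
Proof. by rewrite dotvC dotvNl dotvC. Qed.

Lemma dotv0l w : dotv 0 w = 0.
Proof. by rewrite -(scale0r 0) dotvZl mul0r. Qed.

Lemma dotv_line u v u' v' a : dotv (u + a *: v) (u' + a *: v') =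
  dotv u u' + a * (dotv u v' + dotv v u') + a ^+ 2 * dotv v v'.
Proof. by rewrite !dotvDl !dotvDr !dotvZl !dotvZr; ring. Qed.

Lemma dotv_eq0 u : dotv u u = 0 -> u = 0.
Proof.
move=> /eqP; rewrite psumr_eq0 => [/allP u0|l _]; last by rewrite -expr2 sqr_ge0.
apply/rowP => l; have /implyP := u0 l (mem_index_enum _).
by rewrite mxE mulf_eq0 orbb => /(_ isT) /eqP.
Qed.

Lemma enorm_sqr u : enorm u ^+ 2 = dotv u u.
Proof. by rewrite sqr_sqrtr // dotv_ge0. Qed.

Lemma enorm_ge0 u : 0 <= enorm u.
Proof. exact: sqrtr_ge0. Qed.

Lemma enorm_eq0 u : (enorm u == 0) = (u == 0).
Proof.
apply/eqP/eqP => [u0|->]; last by rewrite /enorm dotv0l sqrtr0.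
by apply: dotv_eq0; rewrite -enorm_sqr u0 expr0n.
Qed.

Lemma enormN u : enorm (- u) = enorm u.
Proof. by rewrite /enorm dotvNl dotvNr opprK. Qed.

Lemma enormZ a u : 0 <= a -> enorm (a *: u) = a * enorm u.
Proof.
move=> a0; rewrite /enorm dotvZl dotvZr mulrA -expr2 sqrtrM ?sqr_ge0 //.
by rewrite sqrtr_sqr ger0_norm.
Qed.

Lemma dotv_le_enorm u v : `|dotv u v| <= enorm u * enorm v.
Proof.
have [->|u0] := eqVneq u 0; first by rewrite dotv0l normr0 mulr_ge0 ?enorm_ge0.
have [->|v0] := eqVneq v 0; first by rewrite dotvC dotv0l normr0 mulr_ge0 ?enorm_ge0.
have A0 : 0 < enorm u by rewrite lt0r enorm_eq0 u0 enorm_ge0.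
have B0 : 0 < enorm v by rewrite lt0r enorm_eq0 v0 enorm_ge0.
have hu := enorm_sqr u; have hv := enorm_sqr v.
have e1 := dotv_ge0 (enorm v *: u - enorm u *: v).
have e2 := dotv_ge0 (enorm v *: u + enorm u *: v).
rewrite !dotvDl !dotvDr !dotvNl !dotvNr !dotvZl !dotvZr (dotvC v u) -hu -hv in e1 e2.
have AB := mulr_gt0 A0 B0.
by rewrite ler_norml; apply/andP; split; nra.
Qed.

Lemma enormD u v : enorm (u + v) <= enorm u + enorm v.
Proof.
have := dotv_le_enorm u v; rewrite ler_norml => /andP[_ uv].
rewrite -(ler_pXn2r (_ : 0 < 2)%N) ?nnegrE ?addr_ge0 ?enorm_ge0 //.
by rewrite enorm_sqr dotvDl !dotvDr (dotvC v u) -!enorm_sqr; nra.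
Qed.

Lemma enorm_conic u v a b : 0 <= a -> 0 <= b ->
  enorm (a *: u + b *: v) <= a * enorm u + b * enorm v.
Proof. by move=> a0 b0; rewrite -enormZ // -[b * _]enormZ // enormD. Qed.

Lemma enorm_normalize u : u != 0 -> enorm ((enorm u)^-1 *: u) = 1.
Proof.
move=> u0; have A0 : 0 < enorm u by rewrite lt0r enorm_eq0 u0 enorm_ge0.
by rewrite enormZ ?invr_ge0 ?ltW // mulVf ?gt_eqF.
Qed.

Lemma unit_dotv_self u : enorm u = 1 -> dotv u u = 1.
Proof. by move=> u1; rewrite -enorm_sqr u1 expr1n. Qed.

Lemma unit_dotv_range u v : enorm u = 1 -> enorm v = 1 -> -1 <= dotv u v <= 1.
Proof. by move=> u1 v1; rewrite -ler_norml -[1](mulr1 1) -{1}u1 -v1 dotv_le_enorm. Qed.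

Lemma unit_dotv_eq1 u v : enorm u = 1 -> enorm v = 1 -> dotv u v = 1 -> u = v.
Proof.
move=> u1 v1 uv; apply/eqP; rewrite -subr_eq0; apply/eqP/dotv_eq0.
rewrite dotvDl !dotvDr !dotvNl !dotvNr !unit_dotv_self // (dotvC v) uv; ring.
Qed.

End InnerProduct.

Lemma pm1_cases {R : realType} {x : R} : -1 <= x <= 1 ->
  [\/ -1 < x < 1, x = -1 | x = 1].
Proof.
move=> /andP[x_geN1 x_le1].
have [->|x_neqN1] := eqVneq x (-1); first by constructor 2.
have [->|x_neq1] := eqVneq x 1; first by constructor 3.
by constructor 1; rewrite !lt_neqAle eq_sym x_neqN1 x_neq1 x_geN1 x_le1.
Qed.

Lemma pihalfK {R : realType} (x : R) : pi / 2 * (2 / pi * x) = x.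
Proof.
by rewrite mulrA mulf_div [2 * pi]mulrC divff ?mul1r // mulf_neq0 ?pnatr_eq0 ?gt_eqF ?pi_gt0.
Qed.

Section GramPath.
Context {R : realType} {n k : nat}.
Implicit Types (F D : 'M[R]_(n, k)) (t : R).

Lemma gram_dotv F i j : gram F i j = dotv (row i F) (row j F).
Proof. by rewrite /gram mxE; apply: eq_bigr => l _; rewrite !mxE. Qed.

Lemma row_Fpath F D t i : row i (Fpath F D t) =
  (enorm (row i F + t *: row i D))^-1 *: (row i F + t *: row i D).
Proof. by apply/rowP => l; rewrite !mxE mulrC. Qed.

Lemma gram_range F i j : (forall i, enorm (row i F) = 1) -> -1 <= gram F i j <= 1.
Proof. by move=> unitF; rewrite gram_dotv unit_dotv_range. Qed.

Lemma mu_interior F D i j : -1 < gram F i j < 1 ->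
  mu F D i j = 2 / pi * (dotv (row i F) (row j D) + dotv (row j F) (row i D))
               / Num.sqrt (1 - gram F i j ^+ 2).
Proof. by move=> xI; rewrite /mu xI. Qed.

Lemma mu_eqN1 F D i j : gram F i j = -1 -> mu F D i j = 2 / pi * enorm (row i D + row j D).
Proof. by move=> x1; rewrite /mu x1 ltxx eqxx. Qed.

Lemma mu_eq1 F D i j : gram F i j = 1 -> mu F D i j = - (2 / pi * enorm (row i D - row j D)).
Proof.
move=> x1; rewrite /mu x1 ltxx andbF eqxx.
by rewrite (_ : (1 == -1) = false) //; apply/eqP; lra.
Qed.

Section UnitRows.
Context {F : 'M[R]_(n, k)}.
Hypothesis unitF : forall i, enorm (row i F) = 1.

Lemma gram_diag i : gram F i i = 1.
Proof. by rewrite gram_dotv unit_dotv_self. Qed.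

Lemma gram_eq1 i j : gram F i j = 1 -> row i F = row j F.
Proof. by rewrite gram_dotv; apply: unit_dotv_eq1. Qed.

Lemma gram_eqN1 i j : gram F i j = -1 -> row i F = - row j F.
Proof.
by rewrite gram_dotv => fij; apply: unit_dotv_eq1; rewrite ?enormN ?dotvNr ?fij ?opprK.
Qed.

Lemma Fpath0 D : Fpath F D 0 = F.
Proof. by apply/matrixP => i j; rewrite !mxE mul0r addr0 scale0r addr0 unitF divr1. Qed.

Context {D : 'M[R]_(n, k)}.
Hypothesis tanD : tangent F D.

Lemma enorm_path_row i t :
  enorm (row i F + t *: row i D) = Num.sqrt (1 + t ^+ 2 * dotv (row i D) (row i D)).
Proof. by rewrite /enorm dotv_line unit_dotv_self // tanD dotvC tanD !addr0 mulr0 addr0. Qed.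

Lemma enorm_path_row_gt0 i t : 0 < enorm (row i F + t *: row i D).
Proof. by rewrite enorm_path_row sqrtr_gt0 ltr_pwDl // mulr_ge0 ?sqr_ge0 ?dotv_ge0. Qed.

Lemma unit_rows_Fpath t i : enorm (row i (Fpath F D t)) = 1.
Proof. by rewrite row_Fpath enorm_normalize // -enorm_eq0 gt_eqF ?enorm_path_row_gt0. Qed.

Lemma gram_Fpath i j t : gram (Fpath F D t) i j =
  (gram F i j + t * (dotv (row i F) (row j D) + dotv (row j F) (row i D))
   + t ^+ 2 * dotv (row i D) (row j D))
  / pair_scale (dotv (row i D) (row i D)) (dotv (row j D) (row j D)) t.
Proof.
have := enorm_path_row_gt0 i t; have := enorm_path_row_gt0 j t.
rewrite !gram_dotv !row_Fpath dotvZl dotvZr dotv_line !enorm_path_row => gj gi.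
by rewrite /pair_scale (dotvC (row i D)); field; rewrite !gt_eqF.
Qed.

Lemma cvg_asin_gram_Fpath i j :
  (fun t => (asin (gram (Fpath F D t) i j) - asin (gram F i j)) / t) @ 0^'+ -->
  pi / 2 * mu F D i j.
Proof.
have p0 := dotv_ge0 (row i D); have q0 := dotv_ge0 (row j D).
have XE := gram_Fpath i j.
have XI t : 0 < t -> -1 <= gram (Fpath F D t) i j <= 1.
  by move=> _; apply: gram_range => l; exact: unit_rows_Fpath.
have [xI|x1|x1] := pm1_cases (gram_range F i j unitF).
- rewrite mu_interior // -[2 / pi * _ / _]mulrA pihalfK.
  exact: (asin_quot_interior _ _ p0 q0 xI XE).
- have fij := gram_eqN1 i j x1.
  have c0 : dotv (row i F) (row j D) + dotv (row j F) (row i D) = 0.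
    by rewrite fij dotvNl tanD -[row j F]opprK -fij dotvNl tanD oppr0 addr0.
  rewrite x1 mu_eqN1 // pihalfK /enorm.
  have -> : dotv (row i D + row j D) (row i D + row j D) = dotv (row i D) (row i D)
      + dotv (row j D) (row j D) + 2 * dotv (row i D) (row j D).
    by rewrite dotvDl !dotvDr (dotvC (row j D)); ring.
  by apply: (asin_quot_atN1 _ _ p0 q0) XI => t; rewrite XE x1 c0 mulr0 addr0.
- have fij := gram_eq1 i j x1.
  have c0 : dotv (row i F) (row j D) + dotv (row j F) (row i D) = 0.
    by rewrite fij tanD -fij tanD addr0.
  rewrite x1 mu_eq1 // mulrN pihalfK /enorm.
  have -> : dotv (row i D - row j D) (row i D - row j D) = dotv (row i D) (row i D)
      + dotv (row j D) (row j D) - 2 * dotv (row i D) (row j D).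
    by rewrite dotvDl !dotvDr !dotvNl !dotvNr (dotvC (row j D)); ring.
  by apply: (asin_quot_at1 _ _ p0 q0) XI => t; rewrite XE x1 c0 mulr0 addr0.
Qed.

End UnitRows.

End GramPath.

Lemma sum_sym_pairs {V : zmodType} m (s : 'I_m -> 'I_m -> V) :
  (forall i j, s i j = s j i) -> (forall i, s i i = 0) ->
  \sum_(i < m) \sum_(j < m) s i j = (\sum_(i < m) \sum_(j < m | (i < j)%N) s i j) *+ 2.
Proof.
move=> sC s0.
have split_row i : \sum_(j < m) s i j =
    \sum_(j < m | (i < j)%N) s i j + \sum_(j < m | (j < i)%N) s i j.
  rewrite (bigD1 i) //= s0 add0r (bigID (fun j : 'I_m => (i < j)%N)) /=.
  by congr (_ + _); apply: eq_bigl => j; rewrite -(inj_eq val_inj) /=; case: ltngtP.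
rewrite (eq_bigr _ (fun i _ => split_row i)) big_split /= mulr2n; congr (_ + _).
under eq_bigr do rewrite big_mkcond /=.
rewrite exchange_big; apply: eq_bigr => i _; rewrite [RHS]big_mkcond.
by apply: eq_bigr => j _; rewrite sC.
Qed.

Section DirectionalDerivative.
Context {R : realType} {n k : nat}.
Implicit Types (F D : 'M[R]_(n, k)) (Q : 'M[R]_n).

Lemma mu_sym F D i j : mu F D i j = mu F D j i.
Proof.
rewrite /mu !gram_dotv (dotvC (row j F) (row i F)) (addrC (row j D) (row i D)).
rewrite (addrC (dotv (row j F) (row i D))).
by rewrite /enorm -[row j D - row i D]opprB dotvNl dotvNr opprK.
Qed.

Lemma mu_diag F D i : (forall i, enorm (row i F) = 1) -> mu F D i i = 0.
Proof.
move=> unitF; rewrite (mu_eq1 F D i i (gram_diag unitF i)) subrr.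
by rewrite /enorm dotv0l sqrtr0 mulr0 oppr0.
Qed.

Lemma cvg_diff_quot_Phi Q F D : Q^T = Q -> (forall i, enorm (row i F) = 1) ->
  tangent F D -> (fun t => (Phi Q F D t - Phi Q F D 0) / t) @ 0^'+ --> GD Q F D.
Proof.
move=> symQ unitF tanD.
have -> : (fun t => (Phi Q F D t - Phi Q F D 0) / t) = (fun t => 2 / pi *
    \sum_(i < n) \sum_(j < n)
      Q i j * ((asin (gram (Fpath F D t) i j) - asin (gram F i j)) / t)).
  apply: funext => t; rewrite /Phi /frob (Fpath0 unitF) -mulrBr -[_ * _ / t]mulrA.
  congr (_ * _).
  rewrite -sumrB mulr_suml; apply: eq_bigr => i _.
  by rewrite -sumrB mulr_suml; apply: eq_bigr => j _; rewrite !mxE; ring.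
have -> : GD Q F D = 2 / pi * \sum_(i < n) \sum_(j < n) Q i j * (pi / 2 * mu F D i j).
  rewrite mulr_sumr; under eq_bigr do rewrite mulr_sumr.
  under eq_bigr do under eq_bigr do rewrite mulrCA (mulrCA (2 / pi)) pihalfK.
  rewrite sum_sym_pairs => [|i j|i]; last by rewrite mu_diag // mulr0.
    rewrite -mulr_natl; congr (_ * _).
    by apply: eq_bigr => i _; apply: eq_bigl => j; rewrite andbT.
  by rewrite -{1}symQ mxE mu_sym.
apply: cvgMl_tmp; apply: cvg_big => [|i _]; first exact: add_continuous.
apply: cvg_big => [|j _]; first exact: add_continuous.
exact: cvgMl_tmp (cvg_asin_gram_Fpath unitF tanD i j).
Qed.

End DirectionalDerivative.

Lemma sg_split {R : realType} (c x m : R) : -1 <= x <= 1 ->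
  c * m = (if `|x| < 1 then c * m else 0) + (if x == Num.sg c then c * m else 0)
          + (if x == - Num.sg c then c * m else 0).
Proof.
move=> /pm1_cases xI; have [->|c0] := eqVneq c 0; first by rewrite !mul0r !if_same !addr0.
have N1_neq1 : (-1 == 1 :> R) = false by apply/eqP; lra.
have sgc : Num.sg c = 1 \/ Num.sg c = -1.
  by case: sgrP c0 => _ //; [left | right].
case: xI => [/andP[x_gtN1 x_lt1]|->|->].
- by case: sgc => ->;
    rewrite ?opprK ltr_norml x_gtN1 x_lt1 (gt_eqF x_gtN1) (lt_eqF x_lt1) !addr0.
- by case: sgc => ->; rewrite ?opprK normrN normr1 ltxx eqxx N1_neq1 ?add0r ?addr0.
- by case: sgc => ->; rewrite ?opprK normr1 ltxx eqxx eq_sym N1_neq1 ?add0r ?addr0.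
Qed.

Section Decomposition.
Context {R : realType} {n k : nat}.
Implicit Types (F D : 'M[R]_(n, k)) (Q : 'M[R]_n) (S : 'M[R]_(n, k) -> Prop).

Let weight_ge0 (c : R) : 0 <= `|c| * (2 / pi).
Proof. by rewrite mulr_ge0 ?divr_ge0 ?pi_ge0. Qed.

Lemma row_scale D (a : R) i : row i (a *: D) = a *: row i D.
Proof. by rewrite linearZ. Qed.

Lemma row_conic D1 D2 (a b : R) i :
  row i (a *: D1 + b *: D2) = a *: row i D1 + b *: row i D2.
Proof. by rewrite linearP linearZ. Qed.

Lemma mu_scale F D i j (a : R) : 0 <= a -> mu F (a *: D) i j = a * mu F D i j.
Proof.
move=> a0; rewrite /mu !row_scale !dotvZr -mulrDr.
rewrite -[a *: row i D + _]scalerDr -scalerBr !enormZ //.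
by case: ifP => _; [|case: ifP => _; [|case: ifP => _]]; ring.
Qed.

Lemma mu_linear F D1 D2 i j (a b : R) : -1 < gram F i j < 1 ->
  mu F (a *: D1 + b *: D2) i j = a * mu F D1 i j + b * mu F D2 i j.
Proof. by move=> xI; rewrite !mu_interior // !row_conic !dotvDr !dotvZr; ring. Qed.

Lemma mul_mu_sg F D i j (c : R) : gram F i j = Num.sg c ->
  c * mu F D i j = - (`|c| * (2 / pi) * enorm (row i D + (- Num.sg c) *: row j D)).
Proof.
case: sgrP => [->|c_gt0|c_lt0] x1; first by rewrite !mul0r oppr0.
  by rewrite mu_eq1 // scaleN1r mulrN mulrA.
by rewrite mu_eqN1 // opprK scale1r !mulNr opprK mulrA.
Qed.

Lemma mul_mu_Nsg F D i j (c : R) : gram F i j = - Num.sg c ->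
  c * mu F D i j = `|c| * (2 / pi) * enorm (row i D + Num.sg c *: row j D).
Proof.
case: sgrP => [->|c_gt0|c_lt0] x1; first by rewrite !mul0r.
  by rewrite mu_eqN1 // scale1r mulrA.
by rewrite opprK in x1; rewrite mu_eq1 // scaleNr scale1r mulrN mulNr mulrA mulNr.
Qed.

Lemma enorm_rows_conic D1 D2 i j (w s a b : R) : 0 <= w -> 0 <= a -> 0 <= b ->
  w * enorm (row i (a *: D1 + b *: D2) + s *: row j (a *: D1 + b *: D2))
  <= a * (w * enorm (row i D1 + s *: row j D1)) + b * (w * enorm (row i D2 + s *: row j D2)).
Proof.
move=> w0 a0 b0; rewrite mulrCA [b * _]mulrCA -mulrDr ler_wpM2l // !row_conic.
have -> : a *: row i D1 + b *: row i D2 + s *: (a *: row j D1 + b *: row j D2) =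
    a *: (row i D1 + s *: row j D1) + b *: (row i D2 + s *: row j D2).
  by apply/rowP => l; rewrite !mxE; ring.
exact: enorm_conic.
Qed.

Lemma Gpart_conic Q F P D1 D2 (a b : R) :
  a * Gpart Q F P D1 + b * Gpart Q F P D2 =
  2 * \sum_(i < n) \sum_(j < n | (i < j)%N && P i j)
        (a * (Q i j * mu F D1 i j) + b * (Q i j * mu F D2 i j)).
Proof.
rewrite /Gpart !(mulrCA _ 2) -mulrDr; congr (_ * _).
rewrite !mulr_sumr -big_split; apply: eq_bigr => i _.
by rewrite !mulr_sumr -big_split.
Qed.

Lemma Gpart_pos_homogeneous Q F P S : pos_homogeneous_on S (Gpart Q F P).
Proof.
move=> D a _ a0; rewrite /Gpart mulrCA; congr (_ * _).
rewrite mulr_sumr; apply: eq_bigr => i _; rewrite mulr_sumr.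
by apply: eq_bigr => j _; rewrite mu_scale // mulrCA.
Qed.

Lemma GD_split Q F D : (forall i, enorm (row i F) = 1) ->
  GD Q F D = Glin Q F D + Gcav Q F D + Gvex Q F D.
Proof.
move=> unitF; rewrite /GD /Glin /Gcav /Gvex /Gpart -!mulrDr -!big_split; congr (_ * _).
apply: eq_bigr => i _ /=; rewrite big_mkcond (big_mkcond (fun j => _ && _)).
rewrite (big_mkcond (fun j => _ && (_ == _))) (big_mkcond (fun j => _ && (_ == - _))).
rewrite -!big_split; apply: eq_bigr => j _ /=; case: (i < j)%N => /=; last by rewrite !addr0.
exact/sg_split/(gram_range _ _ _ unitF).
Qed.

Lemma Glin_linear Q F S : linear_on S (Glin Q F).
Proof.
move=> D1 D2 a b _ _; rewrite Gpart_conic; congr (_ * _).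
apply: eq_bigr => i _; apply: eq_bigr => j /andP[_ x1].
by rewrite mu_linear -?ltr_norml //; ring.
Qed.

Lemma Gcav_le0 Q F D : Gcav Q F D <= 0.
Proof.
rewrite /Gcav /Gpart pmulr_rle0 //; apply: sumr_le0 => i _.
apply: sumr_le0 => j /andP[_ /eqP x1].
by rewrite mul_mu_sg // oppr_le0 mulr_ge0 ?weight_ge0 ?enorm_ge0.
Qed.

Lemma Gcav_concave Q F S : concave_on S (Gcav Q F).
Proof.
move=> D1 D2 l _ _ /andP[l0 l1]; rewrite Gpart_conic /Gcav /Gpart ler_wpM2l //.
apply: ler_sum => i _; apply: ler_sum => j /andP[_ /eqP x1].
rewrite !mul_mu_sg // !mulrN -opprD lerN2.
by apply: enorm_rows_conic; rewrite ?weight_ge0 ?subr_ge0.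
Qed.

Lemma Gvex_ge0 Q F D : 0 <= Gvex Q F D.
Proof.
rewrite /Gvex /Gpart pmulr_rge0 //; apply: sumr_ge0 => i _.
apply: sumr_ge0 => j /andP[_ /eqP x1].
by rewrite mul_mu_Nsg // mulr_ge0 ?weight_ge0 ?enorm_ge0.
Qed.

Lemma Gvex_convex Q F S : convex_on S (Gvex Q F).
Proof.
move=> D1 D2 l _ _ /andP[l0 l1]; rewrite Gpart_conic /Gvex /Gpart ler_wpM2l //.
apply: ler_sum => i _; apply: ler_sum => j /andP[_ /eqP x1].
rewrite !mul_mu_Nsg //.
by apply: enorm_rows_conic; rewrite ?weight_ge0 ?subr_ge0.
Qed.

Lemma linear_convex_on S (g : 'M[R]_(n, k) -> R) : linear_on S g -> convex_on S g.
Proof. by move=> gL D1 D2 l S1 S2 _; rewrite gL. Qed.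

Lemma convex_onD S (g h : 'M[R]_(n, k) -> R) :
  convex_on S g -> convex_on S h -> convex_on S (fun D => g D + h D).
Proof.
move=> gC hC D1 D2 l S1 S2 lI.
by have := gC D1 D2 l S1 S2 lI; have := hC D1 D2 l S1 S2 lI; lra.
Qed.

Lemma convex_onN S (g : 'M[R]_(n, k) -> R) : concave_on S g -> convex_on S (fun D => - g D).
Proof. by move=> gC D1 D2 l S1 S2 lI; have := gC D1 D2 l S1 S2 lI; lra. Qed.

End Decomposition.

Theorem mainTheorem7 (R : realType) (n k : nat) (Q : 'M[R]_n) (F : 'M[R]_(n, k)) :
  Q^T = Q ->
  (forall i : 'I_n, enorm (row i F) = 1) ->
  (forall D : 'M[R]_(n, k), tangent F D ->
     (fun t : R => (Phi Q F D t - Phi Q F D 0) / t) @ 0^'+ --> GD Q F D)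
  /\ (forall D : 'M[R]_(n, k), tangent F D ->
        GD Q F D = Glin Q F D + Gcav Q F D + Gvex Q F D)
  /\ linear_on (tangent F) (Glin Q F)
  /\ (forall D, tangent F D -> Gcav Q F D <= 0)
  /\ concave_on (tangent F) (Gcav Q F)
  /\ pos_homogeneous_on (tangent F) (Gcav Q F)
  /\ (forall D, tangent F D -> 0 <= Gvex Q F D)
  /\ convex_on (tangent F) (Gvex Q F)
  /\ pos_homogeneous_on (tangent F) (Gvex Q F)
  /\ (exists g h : 'M[R]_(n, k) -> R,
        convex_on (tangent F) g /\ convex_on (tangent F) h /\
        forall D, tangent F D -> GD Q F D = g D - h D).
Proof.
move=> symQ unitF.
split; first by move=> D; exact: cvg_diff_quot_Phi.
split; first by move=> D _; exact: GD_split.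
split; first exact: Glin_linear.
split; first by move=> D _; exact: Gcav_le0.
split; first exact: Gcav_concave.
split; first exact: Gpart_pos_homogeneous.
split; first by move=> D _; exact: Gvex_ge0.
split; first exact: Gvex_convex.
split; first exact: Gpart_pos_homogeneous.
exists (fun D => Glin Q F D + Gvex Q F D), (fun D => - Gcav Q F D).
split; first exact/convex_onD/Gvex_convex/linear_convex_on/Glin_linear.
split; first exact/convex_onN/Gcav_concave.
by move=> D _; rewrite GD_split //; ring.
Qed.
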